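(* Let $\ket{\psi_\mathcal{A}}$ be an antisymmetric vector state in $\mathbb{C}^d\otimes\mathbb{C}^d$ with Schmidt rank strictly larger than two. Then for every $0<p\leq 1/(d_\mathcal{S}+1)$, the state $\sigma = p\,|\psi_\mathcal{A}\rangle\langle\psi_\mathcal{A}| + (1-p)\,P_\mathcal{S}/d_\mathcal{S}$ is PPT entangled.
   Context: $V$ is the swap operator, $P_\mathcal{S}=(\mathbb{1}+V)/2$ and $P_\mathcal{A}=(\mathbb{1}-V)/2$ are the projectors onto the symmetric and antisymmetric subspaces of $\mathbb{C}^d\otimes\mathbb{C}^d$ (with $\mathbb{1}$ the identity operator); $d_\mathcal{S}=d(d+1)/2$. A vector $\ket{\psi_\mathcal{A}}$ is antisymmetric if $P_\mathcal{A}\ket{\psi_\mathcal{A}}=\ket{\psi_\mathcal{A}}$. PPT means the partial transpose is positive semidefinite. *)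

(* Complex scalars: an arbitrary numClosedFieldType C
   (e.g. algC, or complex R for R : rcfType / realType). *)
From HB Require Import structures.
From mathcomp Require Import all_boot all_order all_algebra.
From mathcomp Require Export mxtens.
Set Implicit Arguments. Unset Strict Implicit. Unset Printing Implicit Defensive.
Import Order.TTheory GRing.Theory Num.Theory.
Local Open Scope ring_scope.

Section QDefs.
Variable C : numClosedFieldType.

Definition adjmx m n (A : 'M[C]_(m, n)) : 'M[C]_(n, m) := (map_mx Num.conj A)^T.

(* positive semidefinite: <v, A v> is real and >= 0 for all v *)
Definition psd n (A : 'M[C]_n) : Prop :=
  forall v : 'cV[C]_n, 0 <= (adjmx v *m A *m v) 0 0.

Definition is_state n (A : 'M[C]_n) : Prop := psd A /\ \tr A = 1.

(* C^d (x) C^d is indexed by 'I_(d*d) via mxtens_index (i, j) (a (x) b = a *t b) *)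

Definition swap_op d : 'M[C]_(d * d) :=
  \matrix_(i, j) (((@mxtens_unindex d d i).1 == (@mxtens_unindex d d j).2)%:R *
                 ((@mxtens_unindex d d i).2 == (@mxtens_unindex d d j).1)%:R).

Definition PS d : 'M[C]_(d * d) := (2%:R : C)^-1 *: (1%:M + swap_op d).
Definition PA d : 'M[C]_(d * d) := (2%:R : C)^-1 *: (1%:M - swap_op d).

Definition dS d : C := (d * d.+1)%:R / 2%:R.

Definition proj n (psi : 'cV[C]_n) : 'M[C]_n := psi *m adjmx psi.

(* Schmidt rank: rank of the coefficient matrix psi = sum_ij c_ij |i>|j> *)
Definition schmidt_rank d (psi : 'cV[C]_(d * d)) : nat :=
  \rank (\matrix_(i < d, j < d) psi (mxtens_index (i, j)) 0).

(* partial transpose on the second factor *)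
Definition ptrans d (A : 'M[C]_(d * d)) : 'M[C]_(d * d) :=
  \matrix_(i, j) A (mxtens_index ((@mxtens_unindex d d i).1, (@mxtens_unindex d d j).2))
                   (mxtens_index ((@mxtens_unindex d d j).1, (@mxtens_unindex d d i).2)).

Definition PPT d (A : 'M[C]_(d * d)) : Prop := psd (ptrans A).

Definition separable d (rho : 'M[C]_(d * d)) : Prop :=
  exists (n : nat) (p : 'I_n -> C) (A B : 'I_n -> 'M[C]_d),
    (forall k, 0 <= p k) /\ \sum_k p k = 1 /\
    (forall k, is_state (A k) /\ is_state (B k)) /\
    rho = \sum_k p k *: (A k *t B k).

Definition entangled d (rho : 'M[C]_(d * d)) : Prop :=
  is_state rho /\ ~ separable rho.

Definition PPT_entangled d (rho : 'M[C]_(d * d)) : Prop :=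
  entangled rho /\ PPT rho.

End QDefs.

(* sigma := p |psi><psi| + k P_S with k = (1 - p) / d_S is a state: both terms are positive
   and their traces add up to p + k d_S = 1.

   PPT: write W and Psi for the coefficient matrices of a test vector w and of psi.  Then
   <w|sigma^Gamma|w> = p sum_jl M_jl conj(M_lj) + k/2 (|w|^2 + |<Phi+|w>|^2) with M = W^* Psi.
   The first sum is at least -|M|^2, and |W^* Psi|^2 <= |W|^2 |Psi|^2 / 2 since Psi is
   antisymmetric: for antisymmetric c,
     0 <= sum_ijk |c_ij conj(x_k) + c_jk conj(x_i) + c_ki conj(x_j)|^2 = 3 (|x|^2 |c|^2 - 2 |x c|^2).
   So sigma^Gamma >= 0 as soon as p <= k, which is p <= 1 / (d_S + 1).

   Entanglement: <psi|sigma|psi> = p > 0, whereas <u|sigma|u> = 0 for every antisymmetric u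
   orthogonal to psi.  A separable sigma is a positive combination of projections onto product
   vectors, so some x (x) y overlaps psi but is orthogonal to all those u.  Then the
   antisymmetric vector x (x) y - y (x) x is a multiple of psi, which therefore has Schmidt
   rank at most 2. *)

From mathcomp Require Import all_boot all_order all_algebra.
From mathcomp Require Import mxtens ring.
Set Implicit Arguments. Unset Strict Implicit. Unset Printing Implicit Defensive.
Import Order.TTheory GRing.Theory Num.Theory.
Local Open Scope ring_scope.

Local Notation mxform u A v := ((adjmx u *m A *m v) 0 0).
Local Notation dotv u v := ((adjmx u *m v) 0 0).

Section Adjoint.
Variable C : numClosedFieldType.

Lemma adjmxE m n (A : 'M[C]_(m, n)) : adjmx A = (A ^t*)%sesqui.
Proof. exact: map_trmx. Qed.

Lemma adjmx_mul m n p (A : 'M[C]_(m, n)) (B : 'M[C]_(n, p)) :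
  adjmx (A *m B) = adjmx B *m adjmx A.
Proof. by rewrite !adjmxE trmx_mul map_mxM. Qed.

Lemma adjmxK m n (A : 'M[C]_(m, n)) : adjmx (adjmx A) = A.
Proof. by rewrite !adjmxE trmxCK. Qed.

Lemma adjmxD m n (A B : 'M[C]_(m, n)) : adjmx (A + B) = adjmx A + adjmx B.
Proof. by rewrite /adjmx map_mxD linearD. Qed.

Lemma adjmxN m n (A : 'M[C]_(m, n)) : adjmx (- A) = - adjmx A.
Proof. by rewrite /adjmx map_mxN linearN. Qed.

Lemma adjmxZ m n a (A : 'M[C]_(m, n)) : adjmx (a *: A) = a^* *: adjmx A.
Proof. by rewrite /adjmx map_mxZ linearZ. Qed.

Lemma adjmx_delta m n (i : 'I_m) (j : 'I_n) :
  adjmx (delta_mx i j : 'M[C]__) = delta_mx j i.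
Proof. by rewrite /adjmx map_delta_mx trmx_delta. Qed.

Lemma mx11_mulE (A : 'M[C]_(1, 1)) (B : 'M[C]_(1, 1)) : (A *m B) 0 0 = A 0 0 * B 0 0.
Proof. by rewrite mxE big_ord1. Qed.

Lemma adjmx11E (A : 'M[C]_(1, 1)) : (adjmx A) 0 0 = (A 0 0)^*.
Proof. by rewrite !mxE. Qed.

Lemma dotv_adj n (u v : 'cV[C]_n) : dotv u v = (dotv v u)^*.
Proof. by rewrite -adjmx11E adjmx_mul adjmxK. Qed.

Lemma mxform_adj n (A : 'M[C]_n) (u v : 'cV[C]_n) :
  mxform u (adjmx A) v = (mxform v A u)^*.
Proof. by rewrite -adjmx11E !adjmx_mul adjmxK mulmxA. Qed.

Lemma mxformD n (A B : 'M[C]_n) (u v : 'cV[C]_n) :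
  mxform u (A + B) v = mxform u A v + mxform u B v.
Proof. by rewrite mulmxDr mulmxDl mxE. Qed.

Lemma mxformZ n a (A : 'M[C]_n) (u v : 'cV[C]_n) : mxform u (a *: A) v = a * mxform u A v.
Proof. by rewrite -scalemxAr -scalemxAl mxE. Qed.

Lemma dotvBl n (a b u : 'cV[C]_n) : dotv (a - b) u = dotv a u - dotv b u.
Proof. by rewrite adjmxD adjmxN mulmxDl mulNmx [LHS]mxE [X in _ + X]mxE. Qed.

Lemma dotvBr n (a u v : 'cV[C]_n) : dotv a (u - v) = dotv a u - dotv a v.
Proof. by rewrite mulmxBr [LHS]mxE [X in _ + X]mxE. Qed.

Lemma dotvNr n (a u : 'cV[C]_n) : dotv a (- u) = - dotv a u.
Proof. by rewrite mulmxN mxE. Qed.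

Lemma dotvZl n c (a u : 'cV[C]_n) : dotv (c *: a) u = c^* * dotv a u.
Proof. by rewrite adjmxZ -scalemxAl mxE. Qed.

Lemma dotvZr n c (a u : 'cV[C]_n) : dotv a (c *: u) = c * dotv a u.
Proof. by rewrite -scalemxAr mxE. Qed.

Lemma mxform_proj n (u v : 'cV[C]_n) : mxform u (proj v) u = `|dotv v u| ^+ 2.
Proof. by rewrite /proj !mulmxA -mulmxA mx11_mulE normCKC -dotv_adj. Qed.

Lemma mxtrace_proj n (v : 'cV[C]_n) : \tr (proj v) = dotv v v.
Proof. by rewrite /proj mxtrace_mulC /mxtrace big_ord1. Qed.

Lemma mxform_delta n (A : 'M[C]_n) i j :
  mxform (delta_mx i 0 : 'cV_n) A (delta_mx j 0 : 'cV_n) = A i j.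
Proof. by rewrite adjmx_delta -rowE -colE !mxE. Qed.

Lemma mxform_polar n (A : 'M[C]_n) (u v : 'cV[C]_n) t :
  mxform (u + t *: v) A (u + t *: v) =
  mxform u A u + t * mxform u A v + t^* * mxform v A u + t^* * t * mxform v A v.
Proof.
rewrite adjmxD adjmxZ !(mulmxDl, mulmxDr) -!(scalemxAl, scalemxAr) scalerA.
by rewrite !mxE; ring.
Qed.

Lemma mxform_eq0 n (A : 'M[C]_n) : (forall v : 'cV_n, mxform v A v = 0) -> A = 0.
Proof.
move=> A0; apply/matrixP => i j; rewrite mxE.
have polar t : t * A i j + t^* * A j i = 0.
  have := A0 (delta_mx i 0 + t *: delta_mx j 0 : 'cV_n).
  by rewrite mxform_polar !A0 !mxform_delta mulr0 addr0 add0r.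
(* combine the polarizations at t = 1 and t = 'i *)
have : 'i *+ 2 * A i j = 'i * (1 * A i j + 1^* * A j i) + ('i * A i j + 'i^* * A j i).
  by rewrite conjCi rmorph1; ring.
rewrite !polar mulr0 addr0 => /eqP.
by rewrite mulf_eq0 mulrn_eq0 (negbTE (neq0Ci C)) => /eqP.
Qed.

End Adjoint.

Section PositiveSemidefinite.
Variable C : numClosedFieldType.

Lemma dotvvE n (w : 'cV[C]_n) : dotv w w = \sum_a `|w a 0| ^+ 2.
Proof. by rewrite mxE; apply: eq_bigr => a _; rewrite !mxE normCKC. Qed.

Lemma dotvv_ge0 n (w : 'cV[C]_n) : 0 <= dotv w w.
Proof. by rewrite dotvvE sumr_ge0 // => a _; rewrite exprn_ge0. Qed.

Lemma dotvv_eq0 n (w : 'cV[C]_n) : dotv w w = 0 -> w = 0.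
Proof.
rewrite dotvvE => /psumr_eq0P w0; apply/matrixP => a b; rewrite ord1 mxE.
by apply/eqP; rewrite -normr_eq0 -sqrf_eq0 w0 // => c _; rewrite exprn_ge0.
Qed.

Lemma psd_adj_mul m n (B : 'M[C]_(m, n)) : psd (adjmx B *m B).
Proof. by move=> v; rewrite mulmxA -mulmxA -adjmx_mul dotvv_ge0. Qed.

Lemma psd_proj n (v : 'cV[C]_n) : psd (proj v).
Proof. by rewrite /proj -{1}(adjmxK v); apply: psd_adj_mul. Qed.

Lemma psd_add n (A B : 'M[C]_n) : psd A -> psd B -> psd (A + B).
Proof. by move=> psdA psdB v; rewrite mxformD addr_ge0. Qed.

Lemma psd_scale n a (A : 'M[C]_n) : 0 <= a -> psd A -> psd (a *: A).
Proof. by move=> a0 psdA v; rewrite mxformZ mulr_ge0. Qed.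

Lemma psd_adj n (A : 'M[C]_n) : psd A -> adjmx A = A.
Proof.
move=> psdA; apply/eqP; rewrite -subr_eq0; apply/eqP/mxform_eq0 => v.
rewrite mulmxBr mulmxBl [LHS]mxE [X in _ + X]mxE mxform_adj.
by rewrite geC0_conj ?subrr.
Qed.

Lemma psd_sum_proj n (A : 'M[C]_n) : psd A ->
  exists a : 'I_n -> 'cV[C]_n, A = \sum_m proj (a m).
Proof.
move=> psdA; set P := spectralmx A; set D := spectral_diag A.
have /unitarymxP PP : P \is unitarymx := spectral_unitarymx A.
rewrite -adjmxE in PP.
have AE : A = adjmx P *m diag_mx D *m P.
  rewrite adjmxE -invmx_unitary ?spectral_unitarymx //; apply/orthomx_spectralP.
  by apply/normalmxP; rewrite -adjmxE psd_adj.
have rowPK m : row m P *m adjmx P = delta_mx 0 m by rewrite -row_mul PP row1.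
have ProwK m : P *m adjmx (row m P) = delta_mx m 0.
  by rewrite -{1}(adjmxK P) -adjmx_mul rowPK adjmx_delta.
have D0 m : 0 <= D 0 m.
  have := psdA (adjmx (row m P)); rewrite adjmxK AE !mulmxA rowPK -mulmxA ProwK.
  by rewrite -adjmx_delta mxform_delta mxE eqxx mulr1n.
exists (fun m => sqrtC (D 0 m) *: col m (adjmx P)).
rewrite AE diag_mx_sum_delta mulmx_sumr mulmx_suml; apply: eq_bigr => m _.
rewrite /proj adjmxZ -!scalemxAr -!scalemxAl scalerA.
rewrite -normCKC ger0_norm ?sqrtC_ge0 // sqrtCK; congr (_ *: _).
rewrite -(mul_delta_mx (0 : 'I_1)) mulmxA -colE -mulmxA -rowE.
by congr (_ *m _); apply/matrixP => i j; rewrite !mxE conjCK.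
Qed.

End PositiveSemidefinite.

Section Tensor.
Variable C : numClosedFieldType.

Lemma mxtens_index_eq m n (i k : 'I_m) (j l : 'I_n) :
  (mxtens_index (i, j) == mxtens_index (k, l)) = (i == k) && (j == l).
Proof. by rewrite (can_eq (@mxtens_indexK m n)) xpair_eqE. Qed.

Lemma sum_mxtens m n (F : 'I_(m * n) -> C) :
  \sum_a F a = \sum_i \sum_j F (mxtens_index (i, j)).
Proof.
rewrite pair_big /= (reindex (@mxtens_index m n)) /=; first by apply: eq_bigr => -[].
by exists (@mxtens_unindex m n) => a _; rewrite (mxtens_indexK, mxtens_unindexK).
Qed.

Lemma tensvE m n (x : 'cV[C]_m) (y : 'cV[C]_n) i j :
  (x *t y) (mxtens_index (i, j)) 0 = x i 0 * y j 0.
Proof.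
by rewrite -(tensmxE x y i j 0 0); congr (_ _ _); apply: val_inj.
Qed.

Lemma adjmx_tens m n p q (A : 'M[C]_(m, n)) (B : 'M[C]_(p, q)) :
  adjmx (A *t B) = adjmx A *t adjmx B.
Proof. by rewrite /adjmx map_mxT trmx_tens. Qed.

Lemma proj_tens m n (x : 'cV[C]_m) (y : 'cV[C]_n) : proj x *t proj y = proj (x *t y).
Proof. by rewrite /proj -tensmx_mul -adjmx_tens. Qed.

Lemma tensmx_sum m n I J (r : seq I) (s : seq J) (A : I -> 'M[C]_m) (B : J -> 'M[C]_n) :
  (\sum_(i <- r) A i) *t (\sum_(j <- s) B j) = \sum_(i <- r) \sum_(j <- s) A i *t B j.
Proof.
apply/matrixP => a b; rewrite !mxE !summxE mulr_suml; apply: eq_bigr => i _.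
by rewrite summxE mulr_sumr; apply: eq_bigr => j _; rewrite mxE.
Qed.

Lemma mxform_mxtens m n (A : 'M[C]_(m * n)) (u v : 'cV[C]_(m * n)) :
  mxform u A v = \sum_i \sum_j \sum_k \sum_l
    (u (mxtens_index (i, j)) 0)^* * A (mxtens_index (i, j)) (mxtens_index (k, l)) *
    v (mxtens_index (k, l)) 0.
Proof.
rewrite mxE; under eq_bigr do rewrite mxE big_distrl /=.
rewrite exchange_big sum_mxtens; apply: eq_bigr => i _; apply: eq_bigr => j _.
rewrite sum_mxtens; apply: eq_bigr => k _; apply: eq_bigr => l _.
by rewrite !mxE.
Qed.

End Tensor.

Section SwapOperator.
Variables (C : numClosedFieldType) (d : nat).
Local Notation idx i j := (@mxtens_index d d (i, j)).
Local Notation V := (swap_op C d).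

Lemma swap_opE i j k l : V (idx i j) (idx k l) = (i == l)%:R * (j == k)%:R.
Proof. by rewrite mxE !mxtens_indexK. Qed.

Lemma sum_delta (i : 'I_d) (F : 'I_d -> C) : \sum_k (i == k)%:R * F k = F i.
Proof.
rewrite (bigD1 i) //= eqxx mul1r big1 ?addr0 // => k /negbTE.
by rewrite eq_sym => ->; rewrite mul0r.
Qed.

Lemma swap_opM n (A : 'M[C]_(d * d, n)) i j b : (V *m A) (idx i j) b = A (idx j i) b.
Proof.
rewrite mxE sum_mxtens -[RHS](sum_delta j (fun k => A (idx k i) b)).
apply: eq_bigr => k _; rewrite -(sum_delta i (fun l => A (idx k l) b)) mulr_sumr.
apply: eq_bigr => l _.
by rewrite swap_opE mulrCA mulrA.
Qed.

Lemma swap_op_tens (x y : 'cV[C]_d) : V *m (x *t y) = y *t x.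
Proof.
apply/matrixP => a b; case: (mxtens_indexP a) => i j; case: (mxtens_indexP b) => k l.
by rewrite swap_opM !tensmxE [k]ord1 [l]ord1 mulrC.
Qed.

Lemma swap_op_adj : adjmx V = V.
Proof.
apply/matrixP => a b; case: (mxtens_indexP a) => i j; case: (mxtens_indexP b) => k l.
by rewrite mxE [LHS]mxE !swap_opE rmorphM !rmorph_nat mulrC [l == i]eq_sym [k == j]eq_sym.
Qed.

Lemma swap_op_invol : V *m V = 1%:M.
Proof.
apply/matrixP => a b; case: (mxtens_indexP a) => i j; case: (mxtens_indexP b) => k l.
by rewrite swap_opM swap_opE !mxE mxtens_index_eq -natrM mulnb andbC.
Qed.

Lemma dotv_swap (u v : 'cV[C]_(d * d)) : dotv (V *m u) v = dotv u (V *m v).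
Proof. by rewrite adjmx_mul swap_op_adj mulmxA. Qed.

Lemma tr_swap_op : \tr V = d%:R.
Proof.
rewrite /mxtrace sum_mxtens -[d in RHS]card_ord -sumr_const; apply: eq_bigr => i _.
by under eq_bigr do rewrite swap_opE; rewrite sum_delta eqxx.
Qed.

Lemma PA_fixed_swap (u : 'cV[C]_(d * d)) : PA C d *m u = u -> V *m u = - u.
Proof.
rewrite /PA -scalemxAl mulmxBl mul1mx => /(congr1 ( *:%R 2%:R)).
rewrite scalerA mulfV ?pnatr_eq0 // scale1r => Eu.
have -> : V *m u = u - (u - V *m u) by rewrite opprB addrC subrK.
by rewrite Eu scaler_nat mulr2n opprD addrA subrr add0r.
Qed.

Lemma PS_antisym (u : 'cV[C]_(d * d)) : V *m u = - u -> PS C d *m u = 0.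
Proof. by move=> Vu; rewrite /PS -scalemxAl mulmxDl mul1mx Vu subrr scaler0. Qed.

Lemma PS_adj : adjmx (PS C d) = PS C d.
Proof.
rewrite /PS adjmxZ adjmxD swap_op_adj adjmxE trmx1 map_mx1 rmorphV ?rmorph_nat //.
by rewrite unitfE pnatr_eq0.
Qed.

Lemma PS_idem : PS C d *m PS C d = PS C d.
Proof.
have sq : (1%:M + V) *m (1%:M + V) = 2%:R *: (1%:M + V).
  by rewrite mulmxDr !mulmxDl !mul1mx mulmx1 swap_op_invol scaler_nat mulr2n [V + _]addrC.
rewrite /PS -scalemxAl -scalemxAr sq !scalerA mulrAC -mulrA mulfV ?mulr1 //.
by rewrite pnatr_eq0.
Qed.

Lemma psd_PS : psd (PS C d).
Proof. by rewrite -PS_idem -{1}PS_adj; apply: psd_adj_mul. Qed.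

Lemma tr_PS : \tr (PS C d) = dS C d.
Proof.
rewrite /PS mxtraceZ mxtraceD mxtrace1 tr_swap_op /dS mulnS natrD natrM.
by rewrite mulrC addrC.
Qed.

End SwapOperator.

Section Frobenius.
Variable C : numClosedFieldType.

Definition frob2 m n (A : 'M[C]_(m, n)) := \sum_i \sum_j `|A i j| ^+ 2.

Lemma frob2_adj m n (A : 'M[C]_(m, n)) : frob2 (adjmx A) = frob2 A.
Proof.
rewrite /frob2 exchange_big; apply: eq_bigr => i _; apply: eq_bigr => j _.
by rewrite !mxE norm_conjC.
Qed.

Lemma frob2_row m n (A : 'M[C]_(m, n)) : frob2 A = \sum_r frob2 (row r A).
Proof.
rewrite /frob2; apply: eq_bigr => r _; rewrite big_ord1.
by apply: eq_bigr => j _; rewrite mxE.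
Qed.

Lemma sum3_rot n (F : 'I_n -> 'I_n -> 'I_n -> C) :
  \sum_i \sum_j \sum_k F j k i = \sum_i \sum_j \sum_k F i j k.
Proof. by rewrite exchange_big; apply: eq_bigr => j _; rewrite exchange_big. Qed.

Lemma sum3D n (F G : 'I_n -> 'I_n -> 'I_n -> C) :
  \sum_i \sum_j \sum_k (F i j k + G i j k) =
  \sum_i \sum_j \sum_k F i j k + \sum_i \sum_j \sum_k G i j k.
Proof.
rewrite -big_split; apply: eq_bigr => i _; rewrite -big_split.
by apply: eq_bigr => j _; rewrite -big_split.
Qed.

Lemma sum3_cyclic n (F : 'I_n -> 'I_n -> 'I_n -> C) :
  \sum_i \sum_j \sum_k (F i j k + F j k i + F k i j) = 3%:R * \sum_i \sum_j \sum_k F i j k.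
Proof.
rewrite !sum3D (sum3_rot F) -(sum3_rot (fun a b c => F c a b)) /=; ring.
Qed.

Lemma frob2_mul_antisym_row n (c : 'M[C]_n) (x : 'rV[C]_n) : c^T = - c ->
  2%:R * frob2 (x *m c) <= frob2 x * frob2 c.
Proof.
move=> anti; have cN i j : c j i = - c i j.
  by have /matrixP/(_ i j) := anti; rewrite !mxE.
pose P i j k := c i j * (x 0 k)^*.
pose g i j k := P i j k * (P i j k)^* + P i j k * (P j k i)^* + P j k i * (P i j k)^*.
pose Y := \sum_j `|(x *m c) 0 j| ^+ 2.
have cross : \sum_i \sum_j \sum_k P i j k * (P j k i)^* = - Y.
  rewrite exchange_big /Y -sumrN; apply: eq_bigr => j _.
  have y_row : \sum_k c j k * x 0 k = - (x *m c) 0 j.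
    by rewrite mxE -sumrN; apply: eq_bigr => k _; rewrite cN mulNr mulrC.
  transitivity ((x *m c) 0 j * (\sum_k c j k * x 0 k)^*).
    rewrite mxE rmorph_sum big_distrlr /=; apply: eq_bigr => i _.
    by apply: eq_bigr => k _; rewrite /P /= !rmorphM /= conjCK; ring.
  by rewrite y_row rmorphN mulrN normCK.
have cross' : \sum_i \sum_j \sum_k P j k i * (P i j k)^* = - Y.
  have -> : - Y = (- Y)^*.
    by rewrite rmorphN /= geC0_conj // sumr_ge0 // => j _; apply: exprn_ge0.
  rewrite -cross rmorph_sum; apply: eq_bigr => i _; rewrite rmorph_sum.
  apply: eq_bigr => j _; rewrite rmorph_sum; apply: eq_bigr => k _.
  by rewrite rmorphM /= conjCK mulrC.
have diag : \sum_i \sum_j \sum_k P i j k * (P i j k)^* = frob2 x * frob2 c.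
  rewrite /frob2 big_ord1 mulrC mulr_suml; apply: eq_bigr => i _.
  rewrite mulr_suml; apply: eq_bigr => j _; rewrite mulr_sumr; apply: eq_bigr => k _.
  by rewrite /P !normCK rmorphM /= conjCK; ring.
have expand i j k :
    `|P i j k + P j k i + P k i j| ^+ 2 = g i j k + g j k i + g k i j.
  by rewrite normCK /g !rmorphD; ring.
have : 0 <= \sum_i \sum_j \sum_k `|P i j k + P j k i + P k i j| ^+ 2.
  by do 3!(apply: sumr_ge0 => ? _); apply: exprn_ge0.
under eq_bigr do under eq_bigr do under eq_bigr do rewrite expand.
rewrite sum3_cyclic !sum3D diag cross cross' pmulr_rge0 ?ltr0n // subr_ge0.
by rewrite lerBrDr [frob2 (x *m c)]/frob2 big_ord1 -/Y mulr_natl mulr2n.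
Qed.

Lemma frob2_mul_antisym m n (A : 'M[C]_(m, n)) (c : 'M[C]_n) : c^T = - c ->
  2%:R * frob2 (A *m c) <= frob2 A * frob2 c.
Proof.
move=> anti; rewrite (frob2_row A) (frob2_row (A *m c)) mulr_sumr mulr_suml.
by apply: ler_sum => r _; rewrite row_mul frob2_mul_antisym_row.
Qed.

Lemma sum_mul_conj_tr_ge n (M : 'M[C]_n) : - frob2 M <= \sum_j \sum_l M j l * (M l j)^*.
Proof.
pose F j l := `|M j l| ^+ 2 + M j l * (M l j)^*.
have E : \sum_j \sum_l `|M j l + M l j| ^+ 2 = (\sum_j \sum_l F j l) *+ 2.
  rewrite mulr2n [X in _ + X]exchange_big -big_split; apply: eq_bigr => j _.
  by rewrite -big_split; apply: eq_bigr => l _; rewrite /F /= !normCK rmorphD /=; ring.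
have : 0 <= \sum_j \sum_l `|M j l + M l j| ^+ 2.
  by apply: sumr_ge0 => j _; apply: sumr_ge0 => l _; apply: exprn_ge0.
rewrite E pmulrn_lge0 // /F; under eq_bigr do rewrite big_split.
by rewrite big_split /= => ?; rewrite -subr_ge0 opprK addrC.
Qed.

End Frobenius.

Section PartialTranspose.
Variables (C : numClosedFieldType) (d : nat).
Local Notation idx i j := (@mxtens_index d d (i, j)).
Implicit Types (A B : 'M[C]_(d * d)) (u w : 'cV[C]_(d * d)).

Lemma ptransE A i j k l : ptrans A (idx i j) (idx k l) = A (idx i l) (idx k j).
Proof. by rewrite mxE !mxtens_indexK. Qed.

Lemma ptransD A B : ptrans (A + B) = ptrans A + ptrans B.
Proof. by apply/matrixP => a b; rewrite !mxE. Qed.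

Lemma ptransZ a A : ptrans (a *: A) = a *: ptrans A.
Proof. by apply/matrixP => a' b; rewrite !mxE. Qed.

Lemma ptrans1 : ptrans (1%:M : 'M[C]_(d * d)) = 1%:M.
Proof.
apply/matrixP => a b; case: (mxtens_indexP a) => i j; case: (mxtens_indexP b) => k l.
by rewrite ptransE !mxE !mxtens_index_eq [l == j]eq_sym.
Qed.

(* the unnormalized maximally entangled vector sum_i e_i (x) e_i *)
Definition maxent : 'cV[C]_(d * d) :=
  \col_a ((mxtens_unindex a).1 == (mxtens_unindex a).2)%:R.

Lemma ptrans_swap : ptrans (swap_op C d) = proj maxent.
Proof.
apply/matrixP => a b; case: (mxtens_indexP a) => i j; case: (mxtens_indexP b) => k l.
by rewrite ptransE swap_opE !mxE big_ord1 !mxE !mxtens_indexK /= rmorph_nat [l == k]eq_sym.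
Qed.

Lemma mxform_ptrans_PS_ge w : 2%:R^-1 * dotv w w <= mxform w (ptrans (PS C d)) w.
Proof.
rewrite /PS ptransZ ptransD ptrans1 ptrans_swap mxformZ mxformD mulmx1 mxform_proj.
by rewrite ler_wpM2l ?invr_ge0 ?ler0n // lerDl exprn_ge0.
Qed.

Definition coefmx u : 'M[C]_d := \matrix_(i, j) u (idx i j) 0.

Lemma coefmx_antisym u : swap_op C d *m u = - u -> (coefmx u)^T = - coefmx u.
Proof. by move=> Vu; apply/matrixP => i j; rewrite !mxE -swap_opM Vu mxE. Qed.

Lemma frob2_coefmx u : frob2 (coefmx u) = dotv u u.
Proof.
rewrite dotvvE sum_mxtens; apply: eq_bigr => i _; apply: eq_bigr => j _.
by rewrite mxE.
Qed.

Lemma mxform_ptrans_proj w u (M := adjmx (coefmx w) *m coefmx u) :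
  mxform w (ptrans (proj u)) w = \sum_j \sum_l M j l * (M l j)^*.
Proof.
rewrite mxform_mxtens exchange_big; apply: eq_bigr => j _.
under eq_bigr do rewrite exchange_big.
rewrite exchange_big; apply: eq_bigr => l _.
rewrite !mxE rmorph_sum big_distrlr; apply: eq_bigr => i _; apply: eq_bigr => k _.
by rewrite ptransE !mxE big_ord1 !mxE !rmorphM /= conjCK; ring.
Qed.

Lemma mxform_ptrans_proj_ge w u : swap_op C d *m u = - u -> dotv u u = 1 ->
  - (2%:R^-1 * dotv w w) <= mxform w (ptrans (proj u)) w.
Proof.
move=> Vu u1; rewrite mxform_ptrans_proj; apply: le_trans (sum_mul_conj_tr_ge _).
rewrite lerN2 ler_pdivlMl ?ltr0n //.
have := frob2_mul_antisym (adjmx (coefmx w)) (coefmx_antisym Vu).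
by rewrite frob2_adj !frob2_coefmx u1 mulr1.
Qed.

Lemma psd_ptrans_proj_PS u p k : swap_op C d *m u = - u -> dotv u u = 1 ->
  0 <= p -> p <= k -> psd (ptrans (p *: proj u + k *: PS C d)).
Proof.
move=> Vu u1 p0 pk w.
rewrite ptransD 2!ptransZ mxformD 2!mxformZ.
have k0 : 0 <= k := le_trans p0 pk.
have N0 : 0 <= 2%:R^-1 * dotv w w by rewrite mulr_ge0 ?invr_ge0 ?ler0n ?dotvv_ge0.
apply: le_trans _ (lerD (ler_wpM2l p0 (mxform_ptrans_proj_ge w Vu u1))
                        (ler_wpM2l k0 (mxform_ptrans_PS_ge w))).
by rewrite mulrN addrC subr_ge0 ler_wpM2r.
Qed.

End PartialTranspose.

Section Separability.
Variables (C : numClosedFieldType) (d : nat).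
Local Notation V := (swap_op C d).

Lemma separable_sum_proj (s : 'M[C]_(d * d)) : separable s ->
  exists (I : finType) (q : I -> C) (x y : I -> 'cV[C]_d),
    (forall t, 0 <= q t) /\ s = \sum_t q t *: proj (x t *t y t).
Proof.
case=> N [p [A [B [p0 [_ [st ->]]]]]].
have [a Ea] : exists a : 'I_N -> 'I_d -> 'cV[C]_d, forall k, A k = \sum_m proj (a k m).
  apply: (fin_all_exists (U := fun=> _) (P := fun k a => A k = \sum_m proj (a m))) => k.
  by apply: psd_sum_proj; case: (st k) => -[].
have [b Eb] : exists b : 'I_N -> 'I_d -> 'cV[C]_d, forall k, B k = \sum_n proj (b k n).
  apply: (fin_all_exists (U := fun=> _) (P := fun k b => B k = \sum_n proj (b n))) => k.
  by apply: psd_sum_proj; case: (st k) => _ [].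
exists ('I_N * 'I_d * 'I_d)%type, (fun t => p t.1.1), (fun t => a t.1.1 t.1.2),
  (fun t => b t.1.1 t.2); split=> [t|]; first exact: p0.
transitivity (\sum_k \sum_m \sum_n p k *: proj (a k m *t b k n)).
  apply: eq_bigr => k _; rewrite Ea Eb tensmx_sum scaler_sumr; apply: eq_bigr => m _.
  by rewrite scaler_sumr; apply: eq_bigr => n _; rewrite proj_tens.
by rewrite pair_big /= pair_big.
Qed.

Lemma separable_product_witness (s : 'M[C]_(d * d)) (v : 'cV[C]_(d * d)) :
  separable s -> mxform v s v != 0 ->
  exists x y : 'cV[C]_d, dotv (x *t y) v != 0 /\
    forall u : 'cV[C]_(d * d), mxform u s u = 0 -> dotv (x *t y) u = 0.
Proof.
case/separable_sum_proj => I [q [x [y [q0 ->]]]].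
have formE (u : 'cV[C]_(d * d)) :
    mxform u (\sum_t q t *: proj (x t *t y t)) u = \sum_t q t * `|dotv (x t *t y t) u| ^+ 2.
  rewrite mulmx_sumr mulmx_suml summxE; apply: eq_bigr => t _.
  by rewrite mxformZ mxform_proj.
have ge0 (u : 'cV[C]_(d * d)) t : 0 <= q t * `|dotv (x t *t y t) u| ^+ 2.
  by rewrite mulr_ge0 ?exprn_ge0.
rewrite formE => /eqP/(psumr_neq0P (fun t _ => ge0 v t)) [t /andP[_ pos]].
have qt : q t != 0 by apply: contraTneq pos => ->; rewrite mul0r ltxx.
exists (x t), (y t); split=> [|u].
  by apply: contraTneq pos => ->; rewrite normr0 expr2 !mulr0 ltxx.
rewrite formE => /(psumr_eq0P (fun t _ => ge0 u t))/(_ t isT)/eqP.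
by rewrite mulf_eq0 (negbTE qt) sqrf_eq0 normr_eq0 => /eqP.
Qed.

Lemma coefmxZ a (u : 'cV[C]_(d * d)) : coefmx (a *: u) = a *: coefmx u.
Proof. by apply/matrixP => i j; rewrite !mxE. Qed.

Lemma rank_coefmx_wedge (x y : 'cV[C]_d) : (\rank (coefmx (x *t y - y *t x)) <= 2)%N.
Proof.
have -> : coefmx (x *t y - y *t x) = x *m y^T - y *m x^T.
  apply/matrixP => i j; rewrite mxE [LHS]mxE [X in _ + X]mxE !tensvE.
  by rewrite !mxE !big_ord1 !mxE.
apply: leq_trans (mxrank_add _ _) _; rewrite mxrank_opp.
rewrite -[2%N]/(1 + 1)%N.
by apply: leq_add; apply: leq_trans (mxrankM_maxl _ _) (rank_leq_col _).
Qed.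

Lemma schmidt_rank_le2 (psi : 'cV[C]_(d * d)) (x y : 'cV[C]_d) :
  V *m psi = - psi -> dotv psi psi = 1 -> dotv (x *t y) psi != 0 ->
  (forall u : 'cV[C]_(d * d), V *m u = - u -> dotv psi u = 0 -> dotv (x *t y) u = 0) ->
  (schmidt_rank psi <= 2)%N.
Proof.
move=> Vpsi psi1 xy_psi xy_perp; set z : 'cV[C]_(d * d) := x *t y - y *t x.
have dot_z (u : 'cV[C]_(d * d)) : V *m u = - u -> dotv z u = 2%:R * dotv (x *t y) u.
  move=> Vu; rewrite dotvBl -(swap_op_tens x y) dotv_swap Vu dotvNr opprK.
  by rewrite mulr_natl mulr2n.
have Vz : V *m z = - z by rewrite mulmxBr !swap_op_tens opprB.
set lam := dotv psi z; set u : 'cV[C]_(d * d) := z - lam *: psi.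
have Vu : V *m u = - u.
  by rewrite /u mulmxBr -scalemxAr Vz Vpsi scalerN opprK [RHS]opprB addrC.
have psi_u : dotv psi u = 0 by rewrite dotvBr dotvZr psi1 mulr1 subrr.
(* u is antisymmetric and orthogonal to psi, hence orthogonal to z, hence 0 *)
have z_psi : z = lam *: psi.
  apply/eqP; rewrite -subr_eq0 -/u; apply/eqP/dotvv_eq0.
  by rewrite {1}/u dotvBl dotvZl psi_u mulr0 subr0 dot_z // xy_perp // mulr0.
have lam0 : lam != 0.
  apply: contraNneq xy_psi => lam0; have := dot_z psi Vpsi.
  by rewrite z_psi dotvZl lam0 rmorph0 mul0r => /esym/eqP; rewrite mulf_eq0 pnatr_eq0.
have -> : psi = lam^-1 *: z by rewrite z_psi scalerA mulVf // scale1r.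
change (\rank (coefmx (lam^-1 *: z)) <= 2)%N.
by rewrite coefmxZ; apply: leq_trans (mxrank_scale _ _) (rank_coefmx_wedge x y).
Qed.

Lemma proj_PS_not_separable (psi : 'cV[C]_(d * d)) p k :
  V *m psi = - psi -> dotv psi psi = 1 -> (2 < schmidt_rank psi)%N ->
  p != 0 -> ~ separable (p *: proj psi + k *: PS C d).
Proof.
move=> Vpsi psi1 rk p0 sep.
have formE (u : 'cV[C]_(d * d)) : V *m u = - u ->
    mxform u (p *: proj psi + k *: PS C d) u = p * `|dotv psi u| ^+ 2.
  move=> Vu; rewrite mxformD 2!mxformZ mxform_proj -mulmxA PS_antisym //.
  by rewrite mulmx0 [X in k * X]mxE mulr0 addr0.
have [|x [y [xy_psi xy_perp]]] := separable_product_witness sep (v := psi).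
  by rewrite formE // psi1 normr1 expr1n mulr1.
suff : (schmidt_rank psi <= 2)%N by rewrite leqNgt rk.
apply: (schmidt_rank_le2 Vpsi psi1 xy_psi) => u Vu psi_u; apply: xy_perp.
by rewrite formE // psi_u normr0 expr2 !mulr0.
Qed.

End Separability.

Unset Implicit Arguments.

Theorem mainTheorem4 (C : numClosedFieldType) (d : nat)
    (psi : 'cV[C]_(d * d))
    (psi_unit : (adjmx psi *m psi) 0 0 = 1)
    (psi_anti : PA C d *m psi = psi)
    (psi_rank : (2 < schmidt_rank psi)%N)
    (p : C) (p_pos : 0 < p) (p_le : p <= (dS C d + 1)^-1) :
  PPT_entangled (p *: proj psi + (1 - p) / dS C d *: PS C d).
Proof.
have Vpsi := PA_fixed_swap psi_anti.
have dS_gt0 : 0 < dS C d.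
  have d_gt0 : (0 < d)%N.
    by apply: leq_trans (leq_trans psi_rank (rank_leq_row _)).
  by rewrite /dS mulr_gt0 ?invr_gt0 ?ltr0n ?muln_gt0 ?d_gt0.
have pk : p <= (1 - p) / dS C d.
  rewrite ler_pdivlMr // lerBrDr -[X in _ + X]mulr1 -mulrDr.
  by rewrite -ler_pdivlMr ?addr_gt0 // div1r.
have k0 : 0 <= (1 - p) / dS C d := le_trans (ltW p_pos) pk.
split; last exact: psd_ptrans_proj_PS Vpsi psi_unit (ltW p_pos) pk.
split; last exact: proj_PS_not_separable Vpsi psi_unit psi_rank (lt0r_neq0 p_pos).
split; first exact: psd_add (psd_scale (ltW p_pos) (psd_proj psi)) (psd_scale k0 (@psd_PS C d)).
by rewrite mxtraceD 2!mxtraceZ mxtrace_proj psi_unit tr_PS mulr1 divfK ?gt_eqF // subrKC.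
Qed.
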